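(* For every integer $m\ge3$, \[ \sum_{n=1}^{\infty}\frac{h_n^{(2)}}{n^{m}}=\sum_{n=1}^{\infty}H_n\,\zeta(m,n)=\zeta_H(m-1)+\zeta_H(m)-\zeta(m-1). \]
   Context: Hyperharmonic numbers: $h_n^{(0)}=1/n$ for $n\ge1$, and for $r\ge1$, $h_n^{(r)}=\sum_{j=1}^{n}h_j^{(r-1)}$. $H_n=\sum_{j=1}^n 1/j$. $\zeta$ is the Riemann zeta function, $\zeta(s,a)=\sum_{j=0}^\infty (j+a)^{-s}$ the Hurwitz zeta function, and $\zeta_H(s)=\sum_{n=1}^{\infty}H_n/n^{s}$ for integers $s\ge2$. *)

From Stdlib Require Import Reals.
Open Scope R_scope.

Fixpoint sum1 (f : nat -> R) (n : nat) : R :=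
  match n with
  | O => 0
  | S k => sum1 f k + f (S k)
  end.

(* Hyperharmonic numbers h_n^{(r)} (only meaningful for n >= 1):
   h_n^{(0)} = 1/n, h_n^{(r)} = sum_{j=1}^n h_j^{(r-1)}. *)
Fixpoint hyperharmonic (r n : nat) : R :=
  match r with
  | O => / INR n
  | S r' => sum1 (fun j => hyperharmonic r' j) n
  end.

Definition harmonic (n : nat) : R := sum1 (fun j => / INR j) n.

Definition is_zeta (s : nat) (z : R) : Prop :=
  infinite_sum (fun k => / (INR (S k)) ^ s) z.

Definition is_hurwitz_zeta (s : nat) (a : R) (z : R) : Prop :=
  infinite_sum (fun j => / (INR j + a) ^ s) z.

Definition is_zetaH (s : nat) (z : R) : Prop :=
  infinite_sum (fun k => harmonic (S k) / (INR (S k)) ^ s) z.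

(* The bound H_k/k^2 <= f(k) - f(k+1) with f(n) = 2(H_n + 2)/n telescopes,
      so sum H_k/k^2 <= f(1) = 6; by comparison zeta_H(s) and zeta(s) converge for s >= 2.
   2. First equality with the right-hand side.  The closed form h_n^(2) = (n+1) H_n - n
      splits h_n^(2)/n^m into H_n/n^(m-1) + H_n/n^m - 1/n^(m-1), term by term.
   3. Hurwitz zeta.  For n >= 1, zeta(m,n) is the tail zeta(m) - sum_{j<n} j^(-m).
   4. Abel summation.  For nonnegative a, g with sum g = z, writing A, G for the partial sums,
        sum_{k<=N} a_k (z - G_(k-1)) = sum_{k<=N} A_k g_k + A_N (z - G_N),
      and the remainder lies between 0 and the tail of sum A_k g_k (A is nondecreasing).
      Hence sum a_k (z - G_(k-1)) = sum A_k g_k.  With a = H (so A = h^(2)) and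
      g_j = j^(-m) this is the equality sum H_n zeta(m,n) = sum h_n^(2)/n^m. *)

From Stdlib Require Import Reals Lra Lia.
Open Scope R_scope.

Lemma Un_cv_const (c : R) : Un_cv (fun _ => c) c.
Proof.
  intros eps heps; exists O; intros n _.
  unfold Rdist; rewrite Rminus_diag, Rabs_R0; exact heps.
Qed.

Lemma nonneg_series_bounded_cv (a : nat -> R) (M : R) :
  (forall n, 0 <= a n) -> (forall n, sum_f_R0 a n <= M) ->
  {l : R | Un_cv (sum_f_R0 a) l}.
Proof.
  intros a_nonneg bounded.
  apply growing_cv.
  - intro n; simpl; specialize (a_nonneg (S n)); lra.
  - exists M; intros x [n ->]; apply bounded.
Qed.

Lemma infinite_sum_ext (a b : nat -> R) (l : R) :
  (forall n, a n = b n) -> infinite_sum a l -> infinite_sum b l.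
Proof.
  intros eq_ab sum_a.
  apply (Un_cv_ext (sum_f_R0 a)); [|exact sum_a].
  intro n; apply sum_eq; intros k _; apply eq_ab.
Qed.

Lemma sum_f_R0_sum1 (g : nat -> R) (n : nat) :
  sum_f_R0 (fun k => g (S k)) n = sum1 g (S n).
Proof. induction n as [|n IH]; [simpl; ring|]. rewrite tech5, IH; reflexivity. Qed.

Lemma sum1_nondecreasing (a : nat -> R) :
  (forall k, 0 <= a (S k)) -> forall n d, sum1 a n <= sum1 a (n + d).
Proof.
  intros a_nonneg n d; induction d as [|d IH]; [rewrite Nat.add_0_r; lra|].
  rewrite Nat.add_succ_r; simpl; specialize (a_nonneg (n + d)%nat); lra.
Qed.

Lemma infinite_sum_tail (g : nat -> R) (z : R) (p : nat) :
  infinite_sum (fun k => g (S k)) z ->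
  infinite_sum (fun j => g (j + S p)%nat) (z - sum1 g p).
Proof.
  intros sum_g.
  assert (partial : forall n,
      sum_f_R0 (fun j => g (j + S p)%nat) n = sum1 g (S (n + p)) - sum1 g p).
  { induction n as [|n IH]; [simpl; ring|].
    rewrite tech5, IH, <- Nat.add_succ_comm; simpl; ring. }
  apply CV_shift' with (k := p) in sum_g.
  apply (Un_cv_ext (fun n => sum_f_R0 (fun k => g (S k)) (n + p) - sum1 g p)).
  - intro n; rewrite partial, sum_f_R0_sum1; reflexivity.
  - apply CV_minus; [exact sum_g|apply Un_cv_const].
Qed.

Section AbelSummation.

Variables (a g : nat -> R) (z L : R).
Hypothesis a_nonneg : forall k, 0 <= a (S k).
Hypothesis g_nonneg : forall k, 0 <= g (S k).
Hypothesis g_sum : infinite_sum (fun k => g (S k)) z.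
Hypothesis Ag_sum : infinite_sum (fun k => sum1 a (S k) * g (S k)) L.

Local Notation A := (sum1 a).
Local Notation G := (sum1 g).
Local Notation Q := (sum_f_R0 (fun k => A (S k) * g (S k))).

Lemma abel_partial_sum (N : nat) :
  sum_f_R0 (fun k => a (S k) * (z - G k)) N = Q N + A (S N) * (z - G (S N)).
Proof.
  induction N as [|N IH]; [simpl; ring|].
  rewrite !tech5, IH; simpl; ring.
Qed.

Lemma abel_remainder_nonneg (N : nat) : 0 <= A (S N) * (z - G (S N)).
Proof.
  apply Rmult_le_pos.
  - pose proof (sum1_nondecreasing a a_nonneg 0 (S N)); simpl in *; lra.
  - rewrite <- sum_f_R0_sum1.
    pose proof (sum_incr _ N z g_sum g_nonneg); lra.
Qed.

(* The remainder is at most the tail L - Q_N: for M >= N,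
   A_N (G_M - G_N) = sum_{N<j<=M} A_N g_j <= sum_{N<j<=M} A_j g_j = Q_M - Q_N. *)
Lemma abel_remainder_le_tail (N : nat) : A (S N) * (z - G (S N)) <= L - Q N.
Proof.
  assert (finite_tails : forall d,
      A (S N) * (G (S (d + N)) - G (S N)) <= Q (d + N) - Q N).
  { induction d as [|d IH]; [simpl; lra|].
    rewrite Nat.add_succ_l, tech5.
    change (G (S (S (d + N)))) with (G (S (d + N)) + g (S (S (d + N)))).
    assert (A_mono : A (S N) <= A (S (S (d + N)))).
    { replace (S (S (d + N))) with (S N + S d)%nat by lia.
      apply sum1_nondecreasing, a_nonneg. }
    pose proof (Rmult_le_compat_r _ _ _ (g_nonneg (S (d + N))) A_mono).
    lra. }
  apply (Rle_cv_lim finite_tails).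
  - apply CV_mult; [apply Un_cv_const|apply CV_minus; [|apply Un_cv_const]].
    apply (Un_cv_ext (fun d => sum_f_R0 (fun k => g (S k)) (d + N))).
    + intro d; apply sum_f_R0_sum1.
    + exact (CV_shift' _ N z g_sum).
  - apply CV_minus; [exact (CV_shift' _ N L Ag_sum)|apply Un_cv_const].
Qed.

(* Since the remainder is squeezed between 0 and the tail L - Q_N, the sums agree. *)
Theorem abel_summation_nonneg :
  infinite_sum (fun k => a (S k) * (z - G k)) L.
Proof.
  intros eps heps.
  destruct (Ag_sum eps heps) as [N0 close].
  exists N0; intros n hn.
  specialize (close n hn).
  pose proof (abel_remainder_nonneg n). pose proof (abel_remainder_le_tail n).
  unfold Rdist in *; rewrite abel_partial_sum.
  apply Rabs_def2 in close; apply Rabs_def1; lra.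
Qed.

End AbelSummation.

Lemma div_nonneg (x y : R) : 0 <= x -> 0 < y -> 0 <= x / y.
Proof. intros hx hy; apply Rmult_le_pos; [exact hx|left; apply Rinv_0_lt_compat, hy]. Qed.

Lemma INR_S_ge1 (k : nat) : 1 <= INR (S k).
Proof. rewrite S_INR; pose proof (pos_INR k); lra. Qed.

Lemma harmonic_S (n : nat) : harmonic (S n) = harmonic n + / INR (S n).
Proof. reflexivity. Qed.

Lemma harmonic_nonneg (n : nat) : 0 <= harmonic n.
Proof.
  induction n as [|n IH]; [unfold harmonic; simpl; lra|].
  rewrite harmonic_S; pose proof (Rinv_0_lt_compat _ (lt_0_INR (S n) (Nat.lt_0_succ n))).
  lra.
Qed.

Lemma harmonic_ge1 (n : nat) : 1 <= harmonic (S n).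
Proof.
  induction n as [|n IH]; [unfold harmonic; simpl; rewrite Rinv_1; lra|].
  rewrite harmonic_S; pose proof (Rinv_0_lt_compat _ (lt_0_INR (S (S n)) (Nat.lt_0_succ _))).
  lra.
Qed.

Lemma hyperharmonic2_S (n : nat) :
  hyperharmonic 2 (S n) = hyperharmonic 2 n + harmonic (S n).
Proof. reflexivity. Qed.

Lemma hyperharmonic2_closed_form (n : nat) :
  hyperharmonic 2 n = (INR n + 1) * harmonic n - INR n.
Proof.
  induction n as [|n IH]; [unfold harmonic; simpl; lra|].
  rewrite hyperharmonic2_S, IH, !harmonic_S, S_INR.
  pose proof (pos_INR n); field; lra.
Qed.

(* The telescoping majorant f(n) = 2 (H_n + 2) / n for the terms H_k / k^2. *)
Definition harmonic_square_majorant (n : nat) : R := 2 * (harmonic n + 2) / INR n.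

(* The real inequality behind the telescoping step, at x = k and H = H_k. *)
Lemma telescoping_inequality (x H : R) : 1 <= x -> 0 <= H ->
  H / x ^ 2 <= 2 * (H + 2) / x - 2 * (H + / (x + 1) + 2) / (x + 1).
Proof.
  intros hx hH.
  assert (gap : 2 * (H + 2) / x - 2 * (H + / (x + 1) + 2) / (x + 1) - H / x ^ 2
              = (H * (x * x - 1) + 2 * x * x + 4 * x) / (x ^ 2 * (x + 1) ^ 2))
    by (field; lra).
  assert (0 <= (H * (x * x - 1) + 2 * x * x + 4 * x) / (x ^ 2 * (x + 1) ^ 2)).
  { apply div_nonneg; [|nra].
    assert (0 <= H * (x * x - 1)) by (apply Rmult_le_pos; nra). nra. }
  lra.
Qed.

Lemma harmonic_square_step (k : nat) :
  harmonic (S k) / INR (S k) ^ 2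
  <= harmonic_square_majorant (S k) - harmonic_square_majorant (S (S k)).
Proof.
  unfold harmonic_square_majorant; rewrite (harmonic_S (S k)), (S_INR (S k)).
  apply telescoping_inequality; [apply INR_S_ge1|apply harmonic_nonneg].
Qed.

Lemma harmonic_square_majorant_nonneg (n : nat) : 0 <= harmonic_square_majorant (S n).
Proof.
  unfold harmonic_square_majorant; pose proof (harmonic_nonneg (S n)).
  apply div_nonneg; [lra|pose proof (INR_S_ge1 n); lra].
Qed.

Lemma harmonic_square_partial_sums_bounded (N : nat) :
  sum_f_R0 (fun k => harmonic (S k) / INR (S k) ^ 2) N <= 6.
Proof.
  assert (telescoped : forall N, sum_f_R0 (fun k => harmonic (S k) / INR (S k) ^ 2) N
                       <= harmonic_square_majorant 1 - harmonic_square_majorant (S (S N))).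
  { intro n; induction n as [|n IH].
    - exact (harmonic_square_step 0).
    - rewrite tech5; pose proof (harmonic_square_step (S n)); lra. }
  assert (f1 : harmonic_square_majorant 1 = 6).
  { unfold harmonic_square_majorant, harmonic; simpl; field. }
  pose proof (telescoped N); pose proof (harmonic_square_majorant_nonneg (S N)); lra.
Qed.

Lemma inv_pow_le_inv_square (x : R) (s : nat) : (2 <= s)%nat -> 1 <= x -> / x ^ s <= / x ^ 2.
Proof.
  intros hs hx; apply Rinv_le_contravar; [apply pow_lt; lra|apply Rle_pow; assumption].
Qed.

Lemma zetaH_cv (s : nat) : (2 <= s)%nat -> {z : R | is_zetaH s z}.
Proof.
  intros hs.
  apply (Rseries_CV_comp _ (fun k => harmonic (S k) / INR (S k) ^ 2)).
  - intro k; pose proof (harmonic_nonneg (S k)); pose proof (INR_S_ge1 k); split.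
    + apply div_nonneg; [assumption|apply pow_lt; lra].
    + apply Rmult_le_compat_l; [assumption|apply inv_pow_le_inv_square; assumption].
  - apply (nonneg_series_bounded_cv _ 6); [|apply harmonic_square_partial_sums_bounded].
    intro k; pose proof (harmonic_nonneg (S k)); pose proof (INR_S_ge1 k).
    apply div_nonneg; [assumption|apply pow_lt; lra].
Qed.

(* zeta(s) converges for s >= 2, by comparison with zeta_H(s), since H_k >= 1. *)
Lemma zeta_cv (s : nat) : (2 <= s)%nat -> {z : R | is_zeta s z}.
Proof.
  intros hs.
  apply (Rseries_CV_comp _ (fun k => harmonic (S k) / INR (S k) ^ s)); [|exact (zetaH_cv s hs)].
  intro k; pose proof (harmonic_ge1 k).
  assert (0 < / INR (S k) ^ s) by (apply Rinv_0_lt_compat, pow_lt; pose proof (INR_S_ge1 k); lra).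
  unfold Rdiv; split; nra.
Qed.

Lemma hurwitz_zeta_as_tail (s p : nat) (z : R) :
  is_zeta s z -> is_hurwitz_zeta s (INR (S p)) (z - sum1 (fun j => / INR j ^ s) p).
Proof.
  intros zeta_sum.
  apply (infinite_sum_ext (fun j => / INR (j + S p) ^ s)).
  - intro j; rewrite plus_INR; reflexivity.
  - exact (infinite_sum_tail (fun j => / INR j ^ s) z p zeta_sum).
Qed.

(* Termwise, h_n^(2)/n^m = H_n/n^(m-1) + H_n/n^m - 1/n^(m-1); hence the series identity. *)
Lemma hyperharmonic2_series (m : nat) (zH1 zH0 z1 : R) : (1 <= m)%nat ->
  is_zetaH (m - 1) zH1 -> is_zetaH m zH0 -> is_zeta (m - 1) z1 ->
  infinite_sum (fun k => hyperharmonic 2 (S k) / INR (S k) ^ m) (zH1 + zH0 - z1).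
Proof.
  intros hm sum_zH1 sum_zH0 sum_z1.
  destruct m as [|p]; [lia|]; replace (S p - 1)%nat with p in * by lia.
  apply (infinite_sum_ext (fun k => harmonic (S k) / INR (S k) ^ p
           + harmonic (S k) / INR (S k) ^ S p - / INR (S k) ^ p)).
  - intro k; rewrite hyperharmonic2_closed_form.
    pose proof (INR_S_ge1 k); pose proof (pow_lt (INR (S k)) p ltac:(lra)).
    rewrite <- !tech_pow_Rmult; field; lra.
  - apply (Un_cv_ext (fun N => sum_f_R0 (fun k => harmonic (S k) / INR (S k) ^ p) N
             + sum_f_R0 (fun k => harmonic (S k) / INR (S k) ^ S p) N
             - sum_f_R0 (fun k => / INR (S k) ^ p) N)).
    + intro N; rewrite <- sum_plus, <- minus_sum; reflexivity.
    + apply CV_minus; [apply CV_plus|]; assumption.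
Qed.

Theorem mainTheorem3 (m : nat) (hm : (3 <= m)%nat) :
  exists (Ssum : R) (Z : nat -> R) (zH1 zH0 z1 : R),
    (forall n : nat, (1 <= n)%nat -> is_hurwitz_zeta m (INR n) (Z n)) /\
    infinite_sum (fun k => hyperharmonic 2 (S k) / (INR (S k)) ^ m) Ssum /\
    infinite_sum (fun k => harmonic (S k) * Z (S k)) Ssum /\
    is_zetaH (m - 1) zH1 /\
    is_zetaH m zH0 /\
    is_zeta (m - 1) z1 /\
    Ssum = zH1 + zH0 - z1.
Proof.
  destruct (zetaH_cv (m - 1) ltac:(lia)) as [zH1 sum_zH1].
  destruct (zetaH_cv m ltac:(lia)) as [zH0 sum_zH0].
  destruct (zeta_cv (m - 1) ltac:(lia)) as [z1 sum_z1].
  destruct (zeta_cv m ltac:(lia)) as [z sum_z].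
  set (g := fun j : nat => / INR j ^ m).
  (* zeta(m, n) = z - sum_{j<n} g(j) *)
  exists (zH1 + zH0 - z1), (fun n => z - sum1 g (pred n)), zH1, zH0, z1.
  pose proof (hyperharmonic2_series m zH1 zH0 z1 ltac:(lia) sum_zH1 sum_zH0 sum_z1)
    as sum_h2.
  repeat split; try assumption.
  - intros [|p] hp; [lia|]; exact (hurwitz_zeta_as_tail m p z sum_z).
  - (* Abel summation with a = H, whose partial sums are h^(2), and g_j = j^(-m) *)
    apply (abel_summation_nonneg harmonic g z).
    + intro k; apply harmonic_nonneg.
    + intro k; left; apply Rinv_0_lt_compat, pow_lt; pose proof (INR_S_ge1 k); lra.
    + exact sum_z.
    + exact sum_h2.
Qed.
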